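(* Let $p$ be a prime, let $G$ be a finite $p$-solvable group and let $P$ be a Sylow $p$-subgroup of $G$. If $P$ is abelian and $N_G(P)$ is $p$-supersolvable, then $G$ is $p$-supersolvable.
   Context: All groups are finite. A group is $p$-supersolvable if every chief factor of order divisible by $p$ is cyclic (of order $p$). *)

From mathcomp Require Import all_boot all_fingroup all_solvable.
Set Implicit Arguments. Unset Strict Implicit. Unset Printing Implicit Defensive.
Local Open Scope group_scope.

(* The series is encoded as a list s = [:: G_1; ...; G_n] read bottom-up
   from 1, with last element G. *)
Definition p_solvable (gT : finGroupType) (p : nat) (G : {group gT}) : Prop :=
  exists s : seq {group gT},
    last 1%G s = G /\
    path (fun H K : {group gT} =>
            (H <| K) && (p.-group (K / H) || p^'.-group (K / H))) 1%G s.

Definition p_supersolvable (gT : finGroupType) (p : nat) (G : {group gT}) : Prop :=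
  forall U V : {group gT}, chief_factor G V U ->
    p %| #|U / V| -> #|U / V| = p.

From mathcomp Require Import all_boot all_fingroup all_solvable.
Set Implicit Arguments. Unset Strict Implicit. Unset Printing Implicit Defensive.
Local Open Scope group_scope.

(* Let U / V be a chief factor of G of order divisible by p. In the p-solvable group
   G / V the minimal normal subgroup U / V is a p-group, so U \subset V * P. As P is
   abelian it centralizes U / V, hence lies in the normal subgroup C of G centralizing
   U / V, and the Frattini argument gives G = C * 'N_G(P). Intersecting with 'N_G(P)
   then turns U / V into an isomorphic chief factor of 'N_G(P), which has order p. *)

Definition p_series_step (gT : finGroupType) (p : nat) (H K : {group gT}) :=
  (H <| K) && (p.-group (K / H) || p^'.-group (K / H)).

Section PSolvable.

Variable gT : finGroupType.
Implicit Types G H K M V : {group gT}.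

Lemma pcore_max_subnormal pi G H : pi.-group H -> H <|<| G -> H \subset 'O_pi(G).
Proof.
move=> piH; have [m] := ubnP #|G|; elim: m G => // m IHm G leGm snHG.
have [defH | [K [snHK nsKG ltKG]]] := subnormalEr snHG.
  by rewrite defH pcore_pgroup_id // -defH.
apply: subset_trans (IHm K _ snHK) _; first exact: leq_trans (proper_card ltKG) _.
by apply: pcore_max; [exact: pcore_pgroup | exact: char_normal_trans (pcore_char _ _) nsKG].
Qed.

Lemma minnormal_sub_pcore pi G M : minnormal M G -> M :&: 'O_pi(G) != 1 ->
  M \subset 'O_pi(G).
Proof.
move=> minM ntMO; have /andP[_ nMG] := mingroupp minM.
have nMO_G : G \subset 'N(M :&: 'O_pi(G)) by rewrite normsI ?gFnorm.
by rewrite -((mingroupP minM).2 _ (introT andP (conj ntMO nMO_G))) ?subsetIr ?subsetIl.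
Qed.

(* M :&: K embeds in K / H and is subnormal in G, so it lies in 'O_pi(G), and then
   so does M by minimality. *)
Lemma minnormal_pgroup_meet pi G M H K :
    minnormal M G -> K <|<| G -> H <| K -> M :&: H = 1 -> M :&: K != 1 ->
  pi.-group (K / H) -> pi.-group M.
Proof.
move=> minM snKG /andP[sHK nHK] tiMH ntMK piKH.
have /andP[_ nMG] := mingroupp minM.
have nsMKK : M :&: K <| K.
  by rewrite /normal subsetIr normsI ?normG // (subset_trans (subnormal_sub snKG)).
have tiHMK : H :&: (M :&: K) = 1 by rewrite setIC -setIA (setIidPr sHK).
have piMK : pi.-group (M :&: K).
  rewrite (isog_pgroup _ (quotient_isog (subset_trans (subsetIr _ _) nHK) tiHMK)).
  exact: pgroupS (quotientS _ (subsetIr _ _)) piKH.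
have sMK_O := pcore_max_subnormal piMK (subnormal_trans (normal_subnormal nsMKK) snKG).
apply: pgroupS (minnormal_sub_pcore minM _) (pcore_pgroup pi G).
apply: contraNneq ntMK => tiMO; apply/eqP/trivgP.
by rewrite -tiMO subsetI subsetIl.
Qed.

Lemma p_series_sub_last p H s : path (p_series_step p) H s -> H \subset last H s.
Proof.
elim: s H => [|K s IHs] H /=; first by rewrite subxx.
by case/andP=> /andP[/andP[sHK _] _] /IHs; apply: subset_trans.
Qed.

Lemma p_series_minnormal p G M H s :
    path (p_series_step p) H s -> last H s = G -> minnormal M G -> M \subset G ->
  M :&: H = 1 -> p.-group M \/ p^'.-group M.
Proof.
move=> + + minM sMG; elim: s H => [|K s IHs] H /=.
  by move=> _ -> tiMG; left; rewrite -(setIidPl sMG) tiMG pgroup1.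
case/andP=> /andP[nsHK pKH] Ks defG tiMH.
have [tiMK | ntMK] := eqVneq (M :&: K) 1; first exact: IHs Ks defG tiMK.
have snKG : K <|<| G.
  by apply/subnormalP; exists s => //; apply: sub_path Ks => X Y /andP[].
by case/orP: pKH => /(minnormal_pgroup_meet minM snKG nsHK tiMH ntMK); [left | right].
Qed.

Lemma p_solvable_minnormal p G M : p_solvable p G -> minnormal M G -> M \subset G ->
  p.-group M \/ p^'.-group M.
Proof.
by case=> s [defG Gs] minM sMG; apply: p_series_minnormal Gs defG minM sMG (setIg1 M).
Qed.

Lemma quotient_factor_pgroup pi H K V : H <| K -> K \subset 'N(V) ->
  pi.-group (K / H) -> pi.-group (K / V / (H / V)).
Proof.
move=> /andP[sHK nHK] nVK; rewrite /pgroup !card_quotient ?quotient_norms //.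
exact/pnat_dvd/index_quotient/(subset_trans (subsetIl _ _) nVK).
Qed.

End PSolvable.

Lemma p_solvable_quotient (gT : finGroupType) p (G V : {group gT}) :
  p_solvable p G -> G \subset 'N(V) -> p_solvable p (G / V).
Proof.
case=> s [defG Gs] nVG; exists [seq (X / V)%G | X <- s].
have triv1V : (1 / V)%G = 1%G :> {group coset_of V} by apply/val_inj/quotient1.
rewrite -triv1V; suff [Vs ->]: path (p_series_step p) (1 / V)%G [seq (X / V)%G | X <- s] /\
    last (1 / V)%G [seq (X / V)%G | X <- s] = (last 1%G s / V)%G.
  by rewrite defG.
rewrite -{}defG in nVG; elim: s 1%G Gs nVG => [|K s IHs] H //=.
case/andP=> /andP[nsHK pKH] Ks nVs; have [-> ->] := IHs K Ks nVs; split=> //.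
have nVK : K \subset 'N(V) := subset_trans (p_series_sub_last Ks) nVs.
rewrite /p_series_step quotient_normal //=.
by case/orP: pKH => /(quotient_factor_pgroup nsHK nVK) ->; rewrite ?orbT.
Qed.

Section ChiefFactors.

Variable gT : finGroupType.
Implicit Types C G H P U V : {group gT}.

Lemma p_solvable_chief_pgroup p G V U : prime p -> p_solvable p G ->
  chief_factor G V U -> p %| #|U / V| -> p.-group (U / V).
Proof.
move=> pr_p solG chiefUV p_dvd; have /andP[maxV /andP[sUG _]] := chiefUV.
have /andP[_ nVG] := maxgroupp maxV.
have [//|p'UV] := p_solvable_minnormal (p_solvable_quotient solG nVG)
  (chief_factor_minnormal chiefUV) (quotientS _ sUG).
by have := pnat_dvd p_dvd p'UV; rewrite pnatE // !inE eqxx.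
Qed.

Lemma pquotient_sub_Sylow (p : nat) G P V U : V <| G -> U <| G -> p.-group (U / V) ->
  p.-Sylow(G) P -> U \subset V * P.
Proof.
move=> /andP[_ nVG] nsUG pUV sylP; have [sUG _] := andP nsUG.
have sylPV := quotient_pHall (subset_trans (pHall_sub sylP) nVG) sylP.
rewrite -quotientSK ?(subset_trans sUG nVG) //.
exact: subset_trans (pcore_max pUV (quotient_normal V nsUG)) (pcore_sub_Hall sylPV).
Qed.

Lemma Frattini_cent_quotient (p : nat) G P V U : V <| G -> U <| G -> p.-Sylow(G) P ->
    P / V \subset 'C(U / V) ->
  exists2 C : {group gT}, C / V \subset 'C(U / V) & C * 'N_G(P) = G.
Proof.
move=> nsVG /andP[_ nUG] sylP cUVP; have [sVG nVG] := andP nsVG.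
pose C := (coset V @*^-1 'C_(G / V)(U / V))%G.
exists C; first by rewrite cosetpreK subsetIr.
have nsCG : C <| G.
  rewrite -{1}(quotientGK nsVG) morphpre_normal ?subsetIl ?sub_im_coset //.
  by rewrite /normal subsetIl normsI ?normG ?norms_cent ?quotient_norms.
have sPG := pHall_sub sylP.
have sPC : P \subset C.
  by rewrite -sub_quotient_pre ?(subset_trans sPG nVG) // subsetI quotientS.
exact: Frattini_arg nsCG (pHall_subl sPC (normal_sub nsCG) sylP).
Qed.

Lemma mulg_modular V U H : V \subset U -> U \subset V * H -> V * (U :&: H) = U.
Proof. by move=> sVU sUVH; rewrite setIC group_modl // (setIidPr sUVH). Qed.

Lemma card_quotient_setI V U H : V \subset U -> U \subset V * H -> U \subset 'N(V) ->
  #|(U :&: H) / (V :&: H)| = #|U / V|.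
Proof.
move=> sVU sUVH nVU; have nVUH := subset_trans (subsetIl U H) nVU.
rewrite -{2}(mulg_modular sVU sUVH) quotientMidl -(card_isog (second_isog nVUH)).
by rewrite setIA (setIidPl sVU).
Qed.

(* A subgroup between V and U is normalized by C, as C centralizes U / V, and by H
   if it is of the form W * V with H \subset 'N(W); as C * H = G, a normal subgroup
   of H strictly between V :&: H and U :&: H would give one of G between V and U. *)
Lemma chief_factor_setI C G H V U : chief_factor G V U -> C * H = G ->
  C / V \subset 'C(U / V) -> U \subset V * H -> chief_factor H (V :&: H) (U :&: H).
Proof.
move=> /andP[maxV nsUG] defG cUVC sUVH; have [ltVU nVG] := andP (maxgroupp maxV).
have [sVU [sUG nUG]] := (proper_sub ltVU, andP nsUG).
have [sCG sHG] := mulG_sub defG.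
have nVU := subset_trans sUG nVG.
have defU := mulg_modular sVU sUVH.
have nsUH_H : U :&: H <| H by rewrite setIC (normalGI sHG nsUG).
rewrite /chief_factor nsUH_H andbT; apply/maxgroupP; split.
  rewrite normsI ?normG ?(subset_trans sHG) // andbT properEneq setSI // andbT.
  apply: contraTneq ltVU => eqVU.
  by rewrite -defU -eqVU mulGSid ?subsetIl ?properxx.
move=> W /andP[ltWU nWH] sVW; have sWU := proper_sub ltWU.
have [sWU' sWH] := (subset_trans sWU (subsetIl U H), subset_trans sWU (subsetIr U H)).
have nVW := subset_trans sWU' nVU.
have sWVU : W * V \subset U by rewrite mul_subG.
have nWV_G : G \subset 'N(W <*> V).
  rewrite -defG mul_subG //; last by rewrite norm_joinEl // normsM // (subset_trans sHG).
  have nsVWV : V <| W <*> V.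
    by rewrite /normal joing_subr (subset_trans _ nVU) // norm_joinEl.
  rewrite -(quotientGK nsVWV); apply: subset_trans (morphpre_norm _ _).
  rewrite -sub_quotient_pre ?(subset_trans sCG) //; apply: subset_trans cUVC _.
  by rewrite (subset_trans _ (cent_sub _)) // centS // quotientS // join_subG sWU'.
have [eqWVU | neWVU] := eqVneq (W * V) U.
  case/andP: ltWU => _; case/negP.
  by rewrite -eqWVU -group_modl // mulGSid.
have ltWVU : W <*> V \proper U by rewrite norm_joinEl // properEneq neWVU.
have eqWV := (maxgroupP maxV).2 _ (introT andP (conj ltWVU nWV_G)) (joing_subr W V).
apply/eqP; rewrite eq_sym eqEsubset sVW subsetI sWH andbT -eqWV.
exact: joing_subl.
Qed.

End ChiefFactors.

Theorem mainTheorem2 (gT : finGroupType) (p : nat) (G P : {group gT}) :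
  prime p -> p_solvable p G -> P \in 'Syl_p(G) -> abelian P ->
  p_supersolvable p 'N_G(P)%G -> p_supersolvable p G.
Proof.
move=> pr_p solG sylP abP ssN U V chiefUV p_dvd; rewrite inE in sylP.
have /andP[/maxgroupp/andP[ltVU nVG] nsUG] := chiefUV.
have nsVG : V <| G by rewrite /normal (subset_trans (proper_sub ltVU) (normal_sub nsUG)).
have pUV := p_solvable_chief_pgroup pr_p solG chiefUV p_dvd.
have sUVP := pquotient_sub_Sylow nsVG nsUG pUV sylP.
have nVU := subset_trans (normal_sub nsUG) nVG.
have cUVP : P / V \subset 'C(U / V).
  by rewrite (subset_trans (quotient_abelian V abP)) // centS // quotientSK.
have [C cUVC defG] := Frattini_cent_quotient nsVG nsUG sylP cUVP.
have sUVN : U \subset V * 'N_G(P).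
  by rewrite (subset_trans sUVP) // mulgS // subsetI (pHall_sub sylP) normG.
rewrite -(card_quotient_setI (proper_sub ltVU) sUVN nVU).
apply: ssN; first exact: chief_factor_setI chiefUV defG cUVC sUVN.
by rewrite card_quotient_setI // proper_sub.
Qed.
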